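(* Let $n\ge 1$, $k\ge 1$ be integers, $d=\gcd(k,n)$, $n=td$, let $\lambda\in\mathbb{F}_{2^n}^*$ and $f(x)=Tr(\lambda x^{2^k+1})$ for $x\in\mathbb{F}_{2^n}$. Then $f$ is negabent if and only if $\lambda$ cannot be written as $$\frac{v_0^{2^{2k}+1}}{(v_0+v_1)^{2^k+1}}$$ for some $v_0\in\mathbb{F}_{2^n}\setminus\mathbb{F}_{2^d}$ with $v_1=v_0^{2^k}$.
   Context: $Tr=Tr_1^n:\mathbb{F}_{2^n}\to\mathbb{F}_2$ is the absolute trace. Fix a self-dual basis $\{\alpha_1,\dots,\alpha_n\}$ of $\mathbb{F}_{2^n}$ over $\mathbb{F}_2$ (i.e. $Tr(\alpha_i\alpha_j)=\delta_{ij}$) and identify $x=\sum x_i\alpha_i$ with $(x_1,\dots,x_n)\in\mathbb{F}_2^n$; let $wt(x)$ be the number of nonzero coordinates. For $f:\mathbb{F}_{2^n}\to\mathbb{F}_2$, $\mathcal{N}_f(\mu)=2^{-n/2}\sum_{x}(-1)^{f(x)+Tr(\mu x)}\,\mathrm{i}^{wt(x)}$ ($\mathrm{i}=\sqrt{-1}$), and $f$ is negabent if $|\mathcal{N}_f(\mu)|=1$ for all $\mu\in\mathbb{F}_{2^n}$. *)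

From HB Require Import structures.
From mathcomp Require Import all_boot all_order all_algebra all_field.
Set Implicit Arguments. Unset Strict Implicit. Unset Printing Implicit Defensive.
Import Order.TTheory GRing.Theory Num.Theory.
Local Open Scope ring_scope.

(* Absolute trace Tr_1^n : F_{2^n} -> F_2, with values in the prime subfield
   {0,1} of F. *)
Definition Tr (F : finFieldType) (n : nat) (x : F) : F :=
  \sum_(i < n) x ^+ (2 ^ i).

Definition self_dual (F : finFieldType) (n : nat) (alpha : 'I_n -> F) : Prop :=
  forall i j : 'I_n, Tr n (alpha i * alpha j) = (i == j)%:R.

Definition vec_of (F : finFieldType) (n : nat) (alpha : 'I_n -> F)
  (c : {ffun 'I_n -> bool}) : F := \sum_(i < n) (c i)%:R * alpha i.

Definition wt (n : nat) (c : {ffun 'I_n -> bool}) : nat := #|[pred i | c i]|.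

(* Nega-Hadamard transform, the sum over x in F_{2^n} being taken over its
   coordinate vectors (x_1,...,x_n) in F_2^n w.r.t. alpha.  The exponent of
   (-1) is f(x) + Tr(mu x), an element of F_2 (embedded in F). *)
Definition nega_transform (F : finFieldType) (n : nat) (alpha : 'I_n -> F)
  (f : F -> F) (mu : F) : algC :=
  (sqrtC (2%:R ^+ n))^-1 *
  \sum_(c : {ffun 'I_n -> bool})
     (-1) ^+ (f (vec_of alpha c) + Tr n (mu * vec_of alpha c) != 0)
     * 'i ^+ wt c.

Definition negabent (F : finFieldType) (n : nat) (alpha : 'I_n -> F)
  (f : F -> F) : Prop :=
  forall mu : F, `|nega_transform alpha f mu| = 1.

From HB Require Import structures.
From mathcomp Require Import all_boot all_order all_algebra all_field.
From mathcomp Require Import ring.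
Import Order.TTheory GRing.Theory Num.Theory.
Local Open Scope ring_scope.
Set Implicit Arguments. Unset Strict Implicit. Unset Printing Implicit Defensive.

(* In the coordinates of a self-dual basis, i^wt(x) * conj(i^wt(x + e))
   equals (-i)^wt(e) * (-1)^Tr(x e), so expanding |N_f(mu)|^2 for the quadratic
   f = Tr(lam x^(q+1)), q = 2^k, and summing over x turns it into a sum over
   the zeros e of the linearized polynomial
     L(e) = (lam e)^(q^-1) + lam e^q + e.
   Hence f is negabent exactly when L has no nonzero zero: if it has none, the
   only term is e = 0, and conversely a nonzero zero b makes the Fourier
   coefficient at b of mu |-> |N_f(mu)|^2 nonzero.  Raising L to the q-th
   power gives lam^q e^(q^2) + e^q + lam e, whose nonzero roots a correspond,
   through a square root s of lam a^q / a, to the factorizations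
   lam = s (1 + s^q) and hence to the representations of lam in terms of
   v0 = ((1 + s) a)^-1. *)

Section CharTwo.

Variable F : finFieldType.
Hypothesis pchar2 : 2%N \in [pchar F].

Lemma exprD_pow2 m (x y : F) : (x + y) ^+ (2 ^ m) = x ^+ (2 ^ m) + y ^+ (2 ^ m).
Proof. by apply: exprDn_pchar; rewrite (eq_pnat _ (pcharf_eq pchar2)) pnatX pnat_id. Qed.

Lemma eq_addr_mul2 (x y z : F) : x = y + 2%:R * z -> x = y.
Proof. by rewrite (pcharf0 pchar2) mul0r addr0. Qed.

Lemma expr_pow2_sum m (I : finType) (G : I -> F) :
  (\sum_i G i) ^+ (2 ^ m) = \sum_i G i ^+ (2 ^ m).
Proof. by apply: (big_morph _ (exprD_pow2 m)); rewrite expr0n expn_eq0. Qed.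

Lemma sqr_inj : injective (fun x : F => x ^+ 2).
Proof.
move=> x y /= hxy; apply/eqP; rewrite -subr_eq0 oppr_pchar2 //.
have : (x + y) ^+ 2 == 0 by rewrite (exprD_pow2 1) hxy addrr_pchar2.
by rewrite expf_eq0.
Qed.

Lemma expr_pow2_dvd d k (x : F) :
  (d %| k)%N -> x ^+ (2 ^ d) = x -> x ^+ (2 ^ k) = x.
Proof.
move=> /dvdnP [j ->] hx; elim: j => [|j IH]; first by rewrite mul0n expr1.
by rewrite mulSn expnD exprM hx IH.
Qed.

Variable n : nat.
Hypothesis n_gt0 : (0 < n)%N.
Hypothesis cardF : #|F| = (2 ^ n)%N.

Lemma expr_pow2_nK j (x : F) : x ^+ (2 ^ (n * j)) = x.
Proof.
elim: j => [|j IH]; first by rewrite muln0 expr1.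
by rewrite mulnS expnD exprM -cardF expf_card IH.
Qed.

Lemma TrD (x y : F) : Tr n (x + y) = Tr n x + Tr n y.
Proof. by rewrite /Tr -big_split; apply: eq_bigr => i _; rewrite exprD_pow2. Qed.

Lemma Tr0 : Tr n (0 : F) = 0.
Proof. by rewrite /Tr big1 // => i _; rewrite expr0n expn_eq0. Qed.

Lemma Tr_sum (I : finType) (G : I -> F) : Tr n (\sum_i G i) = \sum_i Tr n (G i).
Proof. by rewrite /Tr exchange_big; apply: eq_bigr => i _; rewrite expr_pow2_sum. Qed.

Lemma Tr_boolM (b : bool) (y : F) : Tr n (b%:R * y) = b%:R * Tr n y.
Proof. by case: b; rewrite ?mul1r ?mul0r ?Tr0. Qed.

Lemma Tr_sqr (x : F) : Tr n (x ^+ 2) = Tr n x.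
Proof.
case: n n_gt0 cardF => // n' _ cardF'.
rewrite /Tr big_ord_recr big_ord_recl /= -exprM -expnS -cardF' expf_card addrC.
by congr (_ + _); apply: eq_bigr => i _; rewrite -exprM -expnS.
Qed.

Lemma Tr_pow2 m (x : F) : Tr n (x ^+ (2 ^ m)) = Tr n x.
Proof. by elim: m => [|m IH]; rewrite ?expr1 // expnSr exprM Tr_sqr. Qed.

Definition is_bit (t : F) := (t == 0) || (t == 1).

Lemma Tr_bit (x : F) : is_bit (Tr n x).
Proof.
have idem : Tr n x ^+ 2 = Tr n x.
  rewrite -{2}Tr_sqr /Tr (expr_pow2_sum 1).
  by apply: eq_bigr => i _; rewrite -!exprM mulnC.
have : Tr n x * (Tr n x - 1) == 0 by rewrite mulrBr mulr1 -expr2 idem subrr.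
by rewrite mulf_eq0 subr_eq0.
Qed.

Definition sgn (t : F) : algC := (-1) ^+ (t != 0).

Lemma sgnD_bit (t s : F) :
  is_bit t -> is_bit s -> sgn (t + s) = sgn t * sgn s /\ is_bit (t + s).
Proof.
rewrite /is_bit /sgn => /orP[]/eqP-> /orP[]/eqP->;
  rewrite ?addr0 ?add0r ?eqxx ?oner_eq0 ?mul1r ?mulr1 //.
by rewrite addrr_pchar2 // eqxx mulrNN mulr1.
Qed.

Definition chi (x : F) : algC := sgn (Tr n x).

Lemma chiD (x y : F) : chi (x + y) = chi x * chi y.
Proof. by rewrite /chi TrD; case: (sgnD_bit (Tr_bit x) (Tr_bit y)). Qed.

Lemma chi0 : chi 0 = 1.
Proof. by rewrite /chi Tr0 /sgn eqxx. Qed.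

Lemma chi_pow2 m (x : F) : chi (x ^+ (2 ^ m)) = chi x.
Proof. by rewrite /chi Tr_pow2. Qed.

Lemma conj_chi (x : F) : (chi x)^* = chi x.
Proof. by rewrite /chi /sgn rmorphXn rmorphN1. Qed.

Lemma chi_neq0 (x : F) : chi x != 0.
Proof. by rewrite /chi /sgn signr_eq0. Qed.

Variable alpha : 'I_n -> F.
Hypothesis alpha_sd : self_dual alpha.

Local Notation vec := (vec_of alpha).
Local Notation bvec := {ffun 'I_n -> bool}.

Lemma Tr_basisM_vec j (c : bvec) : Tr n (alpha j * vec c) = (c j)%:R.
Proof.
rewrite /vec_of mulr_sumr Tr_sum (bigD1 j) //= big1 => [|i ij].
  by rewrite addr0 mulrCA Tr_boolM alpha_sd eqxx mulr1.
by rewrite mulrCA Tr_boolM alpha_sd eq_sym (negbTE ij) mulr0.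
Qed.

Lemma vec_inj : injective vec.
Proof.
move=> c c' hcc'; apply/ffunP => j.
have := Tr_basisM_vec j c; rewrite hcc' Tr_basisM_vec.
by case: (c j) (c' j) => -[] // /eqP; rewrite ?oner_eq0 // eq_sym oner_eq0.
Qed.

Lemma vec_bij : bijective vec.
Proof.
apply: inj_card_bij; first exact: vec_inj.
by rewrite card_ffun card_bool card_ord cardF.
Qed.

Lemma vec0 : vec [ffun=> false] = 0.
Proof. by rewrite /vec_of big1 // => i _; rewrite ffunE mul0r. Qed.

Lemma vec_addb (c e : bvec) : vec [ffun j => c j (+) e j] = vec c + vec e.
Proof.
rewrite /vec_of -big_split; apply: eq_bigr => i _; rewrite ffunE.
by case: (c i) (e i) => -[]; rewrite /= ?mul1r ?mul0r ?addr0 ?add0r ?addrr_pchar2.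
Qed.

Lemma reindex_vec (G : F -> algC) : \sum_c G (vec c) = \sum_x G x.
Proof. by rewrite (reindex vec) //; apply: onW_bij; exact: vec_bij. Qed.

Lemma sum_chiM (w : F) : \sum_x chi (x * w) = if w == 0 then (2 ^ n)%:R else 0.
Proof.
have [->|w0] := eqVneq w 0.
  by under eq_bigr do rewrite mulr0 chi0; rewrite sumr_const cardF.
suff sum0 : \sum_x chi x = 0 by rewrite (reindex_inj (mulIf w0)) in sum0.
pose y := alpha (Ordinal n_gt0) * alpha (Ordinal n_gt0).
have chi_y : chi y = -1 by rewrite /chi /y alpha_sd eqxx /sgn oner_eq0.
set S := \sum_x chi x.
have : S = - S.
  rewrite {1}/S (reindex_inj (addrI y)) /=.
  by under eq_bigr do rewrite chiD chi_y mulN1r; rewrite sumrN.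
move/eqP; rewrite -subr_eq0 opprK -mulr2n -mulr_natr mulf_eq0 pnatr_eq0 orbF.
by move/eqP.
Qed.

Lemma chi_vecM (c e : bvec) : chi (vec c * vec e) = \prod_j (-1) ^+ (c j && e j).
Proof.
rewrite /chi; have -> : Tr n (vec c * vec e) = \sum_j ((c j && e j) : bool)%:R.
  rewrite {1}/vec_of mulr_suml Tr_sum; apply: eq_bigr => i _.
  by rewrite -mulrA Tr_boolM Tr_basisM_vec; case: (c i) (e i) => -[]; rewrite ?mul1r ?mul0r.
pose P (t : F) (z : algC) := is_bit t /\ sgn t = z.
suff [] : P (\sum_j ((c j && e j) : bool)%:R) (\prod_j (-1) ^+ (c j && e j)) by [].
apply: (big_ind2 P) => [|t1 z1 t2 z2 [b1 <-] [b2 <-]|j _].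
- by rewrite /P /is_bit /sgn eqxx.
- by case: (sgnD_bit b1 b2).
- by case: (c j && e j); rewrite /P /is_bit /sgn ?eqxx ?oner_eq0 ?orbT.
Qed.

Lemma nega_weight_shift (c e : bvec) :
  'i ^+ wt c * ('i ^+ wt [ffun j => c j (+) e j])^* =
  (- 'i) ^+ wt e * chi (vec c * vec e).
Proof.
have wtE (z : algC) (b : bvec) : z ^+ wt b = \prod_j (if b j then z else 1).
  by rewrite /wt -prodr_const big_mkcond.
rewrite chi_vecM !wtE rmorph_prod -!big_split /=; apply: eq_bigr => j _.
rewrite ffunE; case: (c j) (e j) => -[];
  rewrite /= ?rmorph1 ?conjCi ?mulr1 ?mul1r ?expr0 ?expr1 //.
- by rewrite mulrN1 opprK.
- by rewrite mulrN -expr2 sqrCi opprK.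
Qed.

Variables (k : nat) (lam : F).

Local Notation q := (2 ^ k)%N.
Local Notation f := (fun x : F => Tr n (lam * x ^+ (q + 1))).

(* [2 ^ (n * k - k)] is the exponent of the inverse of the Frobenius map
   [x |-> x ^+ q]. *)
Definition negaL (a : F) := (lam * a) ^+ (2 ^ (n * k - k)) + lam * a ^+ q + a.

Lemma negaL0 : negaL 0 = 0.
Proof. by rewrite /negaL mulr0 !expr0n !expn_eq0 /= mulr0 !addr0. Qed.

Lemma chi_quadratic_shift (mu x a : F) :
  chi (lam * x ^+ (q + 1) + mu * x) * chi (lam * (x + a) ^+ (q + 1) + mu * (x + a))
  = chi (x * ((lam * a) ^+ (2 ^ (n * k - k)) + lam * a ^+ q))
    * chi (lam * a ^+ (q + 1) + mu * a).
Proof.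
rewrite -chiD.
have -> : lam * x ^+ (q + 1) + mu * x + (lam * (x + a) ^+ (q + 1) + mu * (x + a))
  = x * (lam * a ^+ q) + (lam * a) * x ^+ q + (lam * a ^+ (q + 1) + mu * a).
  rewrite !addn1 !exprS exprD_pow2.
  by apply: (@eq_addr_mul2 _ _ (lam * (x * x ^+ q) + mu * x)); ring.
rewrite chiD; congr (_ * _); rewrite mulrDr addrC !chiD; congr (_ * _).
rewrite -(chi_pow2 (n * k - k)) exprMn -exprM -expnD subnKC ?leq_pmull //.
by rewrite expr_pow2_nK mulrC.
Qed.

Lemma sqr_norm_nega_transform (mu : F) :
  `|nega_transform alpha f mu| ^+ 2 =
  \sum_(e : bvec) (if negaL (vec e) == 0 then
     (- 'i) ^+ wt e * chi (lam * vec e ^+ (q + 1) + mu * vec e) else 0).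
Proof.
have n2 : (2 ^ n)%:R != 0 :> algC by rewrite pnatr_eq0 expn_eq0.
have sqrt_ge0 : `|sqrtC (2 ^+ n)| = sqrtC (2 ^+ n) :> algC.
  by apply/normr_idP; rewrite sqrtC_ge0 exprn_ge0 // ler0n.
rewrite /nega_transform normrM normfV sqrt_ge0 exprMn exprVn sqrtCK normCK -natrX.
set S := \sum_c _.
have SE : S = \sum_c chi (lam * vec c ^+ (q + 1) + mu * vec c) * 'i ^+ wt c.
  by apply: eq_bigr => c _; rewrite /chi TrD.
pose K (e : bvec) := (- 'i) ^+ wt e * chi (lam * vec e ^+ (q + 1) + mu * vec e).
have -> : S * S^* = \sum_e K e * (if negaL (vec e) == 0 then (2 ^ n)%:R else 0).
  rewrite SE rmorph_sum mulr_suml.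
  transitivity (\sum_c \sum_e chi (vec c * negaL (vec e)) * K e).
    apply: eq_bigr => c _; rewrite mulr_sumr.
    rewrite (reindex_inj (h := fun e : bvec => [ffun j => c j (+) e j])) /=; last first.
      move=> e1 e2 /ffunP h; apply/ffunP => j; have := h j; rewrite !ffunE.
      exact: addbI.
    apply: eq_bigr => e _.
    rewrite rmorphM /= conj_chi vec_addb mulrACA chi_quadratic_shift.
    by rewrite nega_weight_shift /K /negaL [vec c * (_ + vec e)]mulrDr !chiD; ring.
  rewrite exchange_big /=; apply: eq_bigr => e _.
  rewrite -mulr_suml mulrC; congr (_ * _).
  by rewrite (reindex_vec (fun x => chi (x * negaL (vec e)))) sum_chiM.
rewrite mulr_sumr; apply: eq_bigr => e _.
by case: eqP => _; rewrite ?mulr0 // mulrCA mulVf // mulr1.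
Qed.

Lemma negabent_negaL_inj (L_inj : forall a, negaL a = 0 -> a = 0) :
  negabent alpha f.
Proof.
move=> mu; have wt0 : wt ([ffun=> false] : bvec) = 0%N.
  by rewrite /wt; apply: eq_card0 => i; rewrite !inE ffunE.
suff : `|nega_transform alpha f mu| ^+ 2 = 1.
  by move/eqP; rewrite sqrp_eq1 ?normr_ge0 // => /eqP.
rewrite sqr_norm_nega_transform (bigD1 [ffun=> false]) //= vec0 negaL0 eqxx big1.
  by rewrite wt0 addr0 expr0n addn1 /= !mulr0 addr0 chi0 mulr1.
move=> e e0; case: eqP => // /L_inj.
by rewrite -vec0 => /vec_inj /eqP; rewrite (negbTE e0).
Qed.

(* The Fourier coefficient at b of mu |-> |N_f(mu)|^2 is 2^n * K(b) <> 0 when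
   L(b) = 0, whereas negabentness makes that function constant. *)
Lemma negaL_inj_negabent : negabent alpha f -> forall b, negaL b = 0 -> b = 0.
Proof.
move=> bent b Lb; apply/eqP; apply/negPn/negP => b0.
have [vi vK viK] := vec_bij.
pose K (e : bvec) := (- 'i) ^+ wt e * chi (lam * vec e ^+ (q + 1)).
have n2 : (2 ^ n)%:R != 0 :> algC by rewrite pnatr_eq0 expn_eq0.
have E1 : \sum_mu `|nega_transform alpha f mu| ^+ 2 * chi (mu * b) = 0.
  by under eq_bigr do rewrite bent expr1n mul1r; rewrite sum_chiM (negbTE b0).
have E2 : \sum_mu `|nega_transform alpha f mu| ^+ 2 * chi (mu * b)
          = K (vi b) * (2 ^ n)%:R.
  under eq_bigr do rewrite sqr_norm_nega_transform mulr_suml.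
  rewrite exchange_big /=.
  transitivity (\sum_(e : bvec) (if negaL (vec e) == 0 then
                   K e * (if vec e + b == 0 then (2 ^ n)%:R else 0) else 0)).
    apply: eq_bigr => e _; case: eqP => _; last by rewrite big1 // => mu _; rewrite mul0r.
    rewrite -sum_chiM mulr_sumr; apply: eq_bigr => mu _.
    rewrite /K chiD -!mulrA; congr (_ * (_ * _)).
    by rewrite -chiD mulrDr [mu * vec e]mulrC [mu * b]mulrC.
  rewrite (bigD1 (vi b)) //= viK Lb eqxx addrr_pchar2 // eqxx big1 ?addr0 // => e e_b.
  case: eqP => // _; case: eqP => [|_]; last by rewrite mulr0.
  move/eqP; rewrite addr_eq0 oppr_pchar2 // -{1}[b]viK => /eqP /vec_inj ebi.
  by move: e_b; rewrite ebi eqxx.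
move: E2; rewrite E1 => /esym /eqP; rewrite mulf_eq0 (negbTE n2) orbF /K mulf_eq0.
by rewrite (negbTE (chi_neq0 _)) orbF expf_eq0 oppr_eq0 (negbTE (neq0Ci _)) andbF.
Qed.

Lemma negabent_quadraticP : negabent alpha f <-> forall a, negaL a = 0 -> a = 0.
Proof. by split; [exact: negaL_inj_negabent | exact: negabent_negaL_inj]. Qed.

Definition negaP (a : F) := lam ^+ q * (a ^+ q) ^+ q + a ^+ q + lam * a.

Lemma negaL_pow2k (a : F) : negaL a ^+ q = negaP a.
Proof.
rewrite /negaL !exprD_pow2 -exprM -expnD [(lam * a) ^+ _]exprMn.
by rewrite subnK ?leq_pmull // !expr_pow2_nK exprMn -addrA addrC.
Qed.

Lemma negaL_eq0 (a : F) : (negaL a == 0) = (negaP a == 0).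
Proof. by rewrite -negaL_pow2k expf_eq0 expn_gt0. Qed.

Definition nega_repr (v0 : F) :=
  v0 ^+ (2 ^ (2 * k) + 1) / (v0 + v0 ^+ q) ^+ (q + 1).

Lemma expr_pow2_double (x : F) : x ^+ (2 ^ (2 * k)) = (x ^+ q) ^+ q.
Proof. by rewrite mul2n -addnn expnD exprM. Qed.

Lemma negaP_root_of_repr (v0 : F) :
  lam != 0 -> lam = nega_repr v0 -> exists2 a, a != 0 & negaP a = 0.
Proof.
rewrite /nega_repr !addn1 !exprSr expr_pow2_double => lam0 lamE.
have v00 : v0 != 0.
  by apply: contraNneq lam0 => v0_0; rewrite lamE v0_0 mulr0 mul0r.
have v0q0 : v0 + v0 ^+ q != 0.
  by apply: contraNneq lam0 => h0; rewrite lamE h0 mulr0 invr0 mulr0.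
set X := v0 ^+ q in lamE v0q0 *; set Y := X ^+ q in lamE *.
rewrite exprD_pow2 -/Y in lamE.
have X0 : X != 0 by rewrite expf_neq0.
have Y0 : Y != 0 by rewrite expf_neq0.
have XY0 : X + Y != 0 by rewrite -exprD_pow2 expf_neq0.
have YZ0 : Y + Y ^+ q != 0 by rewrite -exprD_pow2 expf_neq0.
exists ((v0 + X) / (v0 * X)); first by rewrite mulf_neq0 // invr_eq0 mulf_neq0.
rewrite /negaP !expr_div_n !exprMn !exprD_pow2 lamE !expr_div_n !exprMn !exprD_pow2.
rewrite -/X -/Y -/X -/Y.
apply: (@eq_addr_mul2 _ _ ((X ^+ 2 + X * Y + Y ^+ 2) / (X * Y * (X + Y)))).
by rewrite add0r; field; rewrite XY0 Y0 X0 v00 v0q0 YZ0 expf_neq0.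
Qed.

(* [s] is a square root of [lam a^q / a] (squaring is bijective), and
   [u = (1 + s) a] is a [(q - 1)]-th root of [s / (1 + s)]. *)
Lemma negaP_root_param (a : F) : lam != 0 -> a != 0 -> negaP a = 0 ->
  exists s u : F, [/\ s != 0, 1 + s != 0, u != 0,
    lam = s * (1 + s ^+ q) & u ^+ q * (1 + s) = s * u].
Proof.
rewrite /negaP; set A := a ^+ q; set B := A ^+ q => lam0 a0 Pa.
have A0 : A != 0 by rewrite expf_neq0.
have lamB : lam ^+ q * B = A + lam * a.
  by apply/eqP; rewrite -subr_eq0 opprD !oppr_pchar2 // addrA Pa.
set t := lam * A / a; set s := t ^+ (2 ^ n.-1); set S := s ^+ q.
have s2 : s ^+ 2 = t.
  by rewrite /s -exprM -expnSr prednK // -(muln1 n) expr_pow2_nK.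
have S2 : S ^+ 2 = lam ^+ q * B / A.
  by rewrite /S exprAC s2 /t !expr_div_n exprMn.
have lamE : lam = s + S * s.
  apply: sqr_inj; rewrite /= (exprD_pow2 1) exprMn S2 s2 /t lamB.
  by apply: (@eq_addr_mul2 _ _ (- (lam * A / a))); field; rewrite A0 a0.
have s0 : s != 0 by apply: contraNneq lam0 => s_0; rewrite lamE s_0 mulr0 addr0.
have sa : s * a = (1 + S) * A.
  apply: (mulfI s0); rewrite mulrA -expr2 s2 /t {1}lamE; field; exact: a0.
have s1 : 1 + s != 0.
  apply: contraNneq lam0 => /eqP; rewrite addr_eq0 oppr_pchar2 // => /eqP s_1.
  by rewrite lamE /S -s_1 expr1n mulr1 addrr_pchar2.
exists s, ((1 + s) * a); split => //.
- by rewrite mulf_neq0.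
- by rewrite lamE mulrDr mulr1 mulrC.
- by rewrite exprMn exprD_pow2 expr1n -/A -/S -sa; ring.
Qed.

Lemma repr_of_param (s u : F) : s != 0 -> 1 + s != 0 -> u != 0 ->
  lam = s * (1 + s ^+ q) -> u ^+ q * (1 + s) = s * u ->
  u^-1 ^+ (2 ^ gcdn k n) != u^-1 /\ lam = nega_repr u^-1.
Proof.
move=> s0 s1 u0 lamE uq.
have Sq1 : 1 + s ^+ q != 0 by rewrite -(expr1n _ q) -exprD_pow2 expf_neq0.
have uqE : u ^+ q = s * u / (1 + s) by rewrite -uq mulfK.
have v0E : u^-1 + u^-1 ^+ q = (s * u)^-1.
  rewrite exprVn uqE; apply: (@eq_addr_mul2 _ _ u^-1).
  by field; rewrite s0 s1 u0.
have reprE : lam = nega_repr u^-1.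
  rewrite /nega_repr !addn1 !exprSr expr_pow2_double v0E !exprVn uqE.
  rewrite !expr_div_n !exprMn uqE exprD_pow2 expr1n lamE.
  by field; rewrite Sq1 s0 s1 u0 !expf_neq0.
split => //; apply/negP => /eqP /(expr_pow2_dvd (dvdn_gcdl k n)) fixed.
have : lam != 0 by rewrite lamE mulf_neq0.
by rewrite reprE /nega_repr fixed addrr_pchar2 // expr0n !addn1 /= invr0 mulr0 eqxx.
Qed.

Lemma negaP_rootP : lam != 0 ->
  (exists2 a, a != 0 & negaP a = 0) <->
  exists v0, v0 ^+ (2 ^ gcdn k n) != v0 /\ lam = nega_repr v0.
Proof.
move=> lam0; split=> [[a a0 Pa] | [v0 [_ lamE]]]; last first.
  exact: negaP_root_of_repr lamE.
have [s [u [s0 s1 u0 lamE uq]]] := negaP_root_param lam0 a0 Pa.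
by exists u^-1; exact: repr_of_param s0 s1 u0 lamE uq.
Qed.

End CharTwo.

Theorem theorem2 (n k : nat) (hn : (1 <= n)%N) (hk : (1 <= k)%N)
  (F : finFieldType) (hchar : 2%N \in [pchar F]) (hcard : #|F| = (2 ^ n)%N)
  (alpha : 'I_n -> F) (hsd : self_dual alpha)
  (lambda : F) (hl : lambda != 0) :
  let d := gcdn k n in
  negabent alpha (fun x => Tr n (lambda * x ^+ (2 ^ k + 1)))
  <->
  ~ (exists v0 : F,
       v0 ^+ (2 ^ d) != v0 /\
       (let v1 := v0 ^+ (2 ^ k) in
        lambda = v0 ^+ (2 ^ (2 * k) + 1) / (v0 + v1) ^+ (2 ^ k + 1))).
Proof.
rewrite /= (negabent_quadraticP hchar hn hcard hsd) -(negaP_rootP hchar hn hcard k hl).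
split=> [L_inj [a a0 /eqP] | no_root a /eqP La].
- by rewrite -(negaL_eq0 hchar hn hcard) => /eqP /L_inj a_0; rewrite a_0 eqxx in a0.
- apply/eqP/negPn/negP => a0; apply: no_root; exists a => //.
  by apply/eqP; rewrite -(negaL_eq0 hchar hn hcard).
Qed.
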